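(* Let $T$ be a graph on a countably infinite set $X$ with maximum degree at most $d$, let $\mu$ be a $T$-invariant mean on $X$ with associated regular Borel probability measure $\bar\mu$ on $\beta X$, and let $\mathcal G(T)$ be the associated graphing on $\beta X$. Then for every $r\ge1$ and every rooted finite graph $H$ of radius $r$ with maximum degree at most $d$, $$\mu(A(T,H))=\bar\mu(A(\mathcal G(T),H)).$$
   Context: A mean on $X$ is a finitely additive $\mu:2^X\to[0,1]$ with $\mu(X)=1$; $\bar\mu$ is the unique regular Borel probability on the Stone–Čech compactification $\beta X$ (ultrafilters on $X$) with $\bar\mu(U_A)=\mu(A)$, $U_A=\{\omega:A\in\omega\}$. A mean is $T$-invariant if it is invariant under some (equivalently every) action of a finitely generated group on $X$ whose Schreier graph with respect to some finite symmetric generating set is $T$ (Schreier graph: edge $\{x,y\}$ when $x\ne y$ and $s(x)=y$ for a generator $s$). Bijections $s$ of $X$ extend to $\beta X$ by $\tilde s(\omega)=\{s(A):A\in\omega\}$; $\mathcal G(T)$ is the graph on $\beta X$ with an edge $\{\omega,\omega'\}$ when $\omega\ne\omega'$ and $\tilde s(\omega)=\omega'$ for a generator $s$ of such an action (this does not depend on the chosen action). A rooted graph has radius $r$ if the maximal distance from the root is $r$. $A(T,H)$ is the set of $x\in X$ whose $r$-neighbourhood in $T$ rooted at $x$ is rooted isomorphic to $H$, and $A(\mathcal G(T),H)$ is the set of $\omega\in\beta X$ whose $r$-neighbourhood in $\mathcal G(T)$ is rooted isomorphic to $H$. *)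

From Stdlib Require Export Reals List.
Open Scope R_scope.

Set Implicit Arguments.

Fixpoint walk_le {W : Type} (E : W -> W -> Prop) (n : nat) (x y : W) : Prop :=
  match n with
  | O => x = y
  | S m => walk_le E m x y \/ exists z, walk_le E m x z /\ E z y
  end.

Definition max_deg_le {W : Type} (E : W -> W -> Prop) (d : nat) : Prop :=
  forall x, exists l : list W, (length l <= d)%nat /\ forall y, E x y -> In y l.

Definition finite_simple_graph {V : Type} (E : V -> V -> Prop) : Prop :=
  (exists l : list V, forall v, In v l) /\
  (forall u v, E u v -> E v u) /\ (forall v, ~ E v v).

Definition dist_eq {W : Type} (E : W -> W -> Prop) (x y : W) (n : nat) : Prop :=
  walk_le E n x y /\ forall m, (m < n)%nat -> ~ walk_le E m x y.

Definition has_radius {V : Type} (E : V -> V -> Prop) (v0 : V) (r : nat) : Prop :=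
  (forall v, walk_le E r v0 v) /\ (exists v, dist_eq E v0 v r).

Definition nbhd_iso {W V : Type} (E : W -> W -> Prop) (r : nat) (x : W)
  (eH : V -> V -> Prop) (v0 : V) : Prop :=
  exists f : V -> W,
    (forall u v, f u = f v -> u = v) /\
    f v0 = x /\
    (forall w, walk_le E r x w <-> exists v, f v = w) /\
    (forall u v, eH u v <-> E (f u) (f v)).

Definition A_set {W V : Type} (E : W -> W -> Prop) (r : nat)
  (eH : V -> V -> Prop) (v0 : V) : W -> Prop :=
  fun x => nbhd_iso E r x eH v0.

Record fg_action (X : Type) := {
  grp : Type;
  gmul : grp -> grp -> grp;
  ginv : grp -> grp;
  gone : grp;
  gmul_assoc : forall a b c, gmul a (gmul b c) = gmul (gmul a b) c;
  gmul_1l : forall a, gmul gone a = a;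
  gmul_Vl : forall a, gmul (ginv a) a = gone;
  act : grp -> X -> X;
  act_one : forall x, act gone x = x;
  act_mul : forall g h x, act (gmul g h) x = act g (act h x);
  gens : list grp;
  gens_sym : forall s, In s gens -> In (ginv s) gens;
  gens_gen : forall g, exists l, (forall s, In s l -> In s gens) /\
                                 g = fold_right gmul gone l
}.

Definition schreier {X : Type} (a : fg_action X) (x y : X) : Prop :=
  x <> y /\ exists s, In s (gens a) /\ act a s x = y.

Definition image {X : Type} (f : X -> X) (A : X -> Prop) : X -> Prop :=
  fun y => exists x, A x /\ f x = y.

Definition is_mean {X : Type} (mu : (X -> Prop) -> R) : Prop :=
  (forall A, 0 <= mu A <= 1) /\
  mu (fun _ => True) = 1 /\
  (forall A B, (forall x, A x -> B x -> False) ->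
     mu (fun x => A x \/ B x) = mu A + mu B).

Definition invariant_mean {X : Type} (a : fg_action X) (mu : (X -> Prop) -> R) : Prop :=
  forall (g : grp a) A, mu (image (act a g) A) = mu A.

Definition is_ultrafilter {X : Type} (w : (X -> Prop) -> Prop) : Prop :=
  ~ w (fun _ => False) /\
  w (fun _ => True) /\
  (forall A B, w A -> w B -> w (fun x => A x /\ B x)) /\
  (forall A B, w A -> (forall x, A x -> B x) -> w B) /\
  (forall A, w A \/ w (fun x => ~ A x)).

Definition betaX (X : Type) := { w : (X -> Prop) -> Prop | is_ultrafilter w }.

Definition U_ {X : Type} (A : X -> Prop) : betaX X -> Prop :=
  fun w => proj1_sig w A.

Definition ext_map {X : Type} (s : X -> X) (w : (X -> Prop) -> Prop) :
  (X -> Prop) -> Prop :=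
  fun B => exists A, w A /\ (forall y, B y <-> image s A y).

Definition graphing {X : Type} (a : fg_action X) (w w' : betaX X) : Prop :=
  w <> w' /\ exists s, In s (gens a) /\
     proj1_sig w' = ext_map (act a s) (proj1_sig w).

Definition is_open {X : Type} (O : betaX X -> Prop) : Prop :=
  forall w, O w -> exists A, proj1_sig w A /\ forall w', U_ A w' -> O w'.

Inductive borel {X : Type} : (betaX X -> Prop) -> Prop :=
| borel_open : forall O, is_open O -> borel O
| borel_compl : forall B, borel B -> borel (fun w => ~ B w)
| borel_union : forall F : nat -> betaX X -> Prop,
    (forall n, borel (F n)) -> borel (fun w => exists n, F n w).

Definition is_compact {X : Type} (K : betaX X -> Prop) : Prop :=
  forall C : (betaX X -> Prop) -> Prop,
    (forall O, C O -> is_open O) ->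
    (forall w, K w -> exists O, C O /\ O w) ->
    exists l, (forall O, In O l -> C O) /\
              forall w, K w -> exists O, In O l /\ O w.

Definition regular_borel_prob {X : Type} (nu : (betaX X -> Prop) -> R) : Prop :=
  (forall B, borel B -> 0 <= nu B) /\
  nu (fun _ => True) = 1 /\
  (forall F : nat -> betaX X -> Prop,
     (forall n, borel (F n)) ->
     (forall m n w, m <> n -> F m w -> F n w -> False) ->
     infinite_sum (fun n => nu (F n)) (nu (fun w => exists n, F n w))) /\
  (forall B, borel B -> forall eps, 0 < eps ->
     exists O, is_open O /\ (forall w, B w -> O w) /\ nu O <= nu B + eps) /\
  (forall B, borel B -> forall eps, 0 < eps ->
     exists K, is_compact K /\ borel K /\ (forall w, K w -> B w) /\
               nu B - eps <= nu K).

From Stdlib Require Import Reals List Lia Classical ClassicalEpsilon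
  FunctionalExtensionality PropExtensionality ProofIrrelevance.
Open Scope R_scope.

(* 1. Words and walks.  In a graph whose edges are the non-loop moves
      u -> s(u) of finitely many maps s, the r-ball around o is the set of
      values of words of length <= r evaluated at o.  Hence the rooted
      r-neighbourhood is determined by the "coincidence pattern" of the words
      of length <= r+1 at o (which pairs of words evaluate to the same point).
   2. Ultrafilters fixed by injections.  On a countable set, an injection f
      can be greedily 3-coloured so that f moves every non-fixed point to a
      different colour; therefore an ultrafilter with f(w) = w contains the
      fixed-point set of f.  Consequently g(w) = h(w) iff {g = h} is in w.
   3. For every pair of words, w and the points of some set in w have the
      same coincidence; finitely many pairs matter, so a single set in w
      consists of points with the same pattern as w, and step 1 concludes. *)

Section Ultrafilter.
Variables (X : Type) (w : betaX X).

Lemma uf_up {A B : X -> Prop} :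
  proj1_sig w A -> (forall x, A x -> B x) -> proj1_sig w B.
Proof. destruct (proj2_sig w) as [_ [_ [_ [H _]]]]. apply H. Qed.

Lemma uf_and {A B : X -> Prop} :
  proj1_sig w A -> proj1_sig w B -> proj1_sig w (fun x => A x /\ B x).
Proof. destruct (proj2_sig w) as [_ [_ [H _]]]. apply H. Qed.

Lemma uf_dich (A : X -> Prop) :
  proj1_sig w A \/ proj1_sig w (fun x => ~ A x).
Proof. destruct (proj2_sig w) as [_ [_ [_ [_ H]]]]. apply H. Qed.

Lemma uf_nonempty {A : X -> Prop} : proj1_sig w A -> exists x, A x.
Proof.
  intros HA. apply NNPP. intros Hempty.
  destruct (proj2_sig w) as [Hfalse _]. apply Hfalse.
  apply (uf_up HA). intros x Hx. apply Hempty. eauto.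
Qed.

Lemma uf_list (I : Type) (L : list I) (P : I -> X -> Prop) :
  (forall i, In i L -> proj1_sig w (P i)) ->
  proj1_sig w (fun x => forall i, In i L -> P i x).
Proof.
  induction L as [|i L IH]; intros H.
  - destruct (proj2_sig w) as [_ [Htrue _]]. apply (uf_up Htrue). intros x _ j [].
  - apply (uf_up (uf_and (H i (or_introl eq_refl)) (IH (fun j Hj => H j (or_intror Hj))))).
    intros x [Hi HL] j [<-|Hj]; auto.
Qed.

Lemma uf_equiv (A B : X -> Prop) :
  (forall x, A x <-> B x) -> (proj1_sig w A <-> proj1_sig w B).
Proof. intros H. split; intros HAB; apply (uf_up HAB); apply H. Qed.

Lemma uf_iff (A B : X -> Prop) :
  proj1_sig w (fun x => A x <-> B x) -> (proj1_sig w A <-> proj1_sig w B).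
Proof.
  intros H. split; intros HAB; apply (uf_up (uf_and HAB H)); intros x [Hx HxAB];
    now apply HxAB.
Qed.

Lemma uf_decide (P : X -> Prop) (Q : Prop) :
  (Q <-> proj1_sig w P) -> proj1_sig w (fun x => P x <-> Q).
Proof.
  intros HQ. destruct (uf_dich P) as [HP|HnP].
  - apply (uf_up HP). intros x Hx. split; auto. intros _. apply HQ, HP.
  - apply (uf_up HnP). intros x Hx. split; [contradiction|].
    intros Q'. exfalso. destruct (uf_nonempty (uf_and HnP (proj1 HQ Q'))) as [y [Hy1 Hy2]].
    contradiction.
Qed.

End Ultrafilter.

Arguments uf_up {X} w {A B}.
Arguments uf_and {X} w {A B}.
Arguments uf_nonempty {X} w {A}.
Arguments uf_dich {X} w A.
Arguments uf_list {X} w {I} L {P}.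
Arguments uf_iff {X} w {A B}.
Arguments uf_equiv {X} w {A B}.
Arguments uf_decide {X} w {P Q}.

Lemma betaX_eq {X : Type} (u v : betaX X) : proj1_sig u = proj1_sig v -> u = v.
Proof. destruct u, v; simpl; intros; subst; f_equal; apply proof_irrelevance. Qed.

Definition pushp {X : Type} (f : X -> X) (w : (X -> Prop) -> Prop) : (X -> Prop) -> Prop :=
  fun B => w (fun x => B (f x)).

Lemma pushp_ultrafilter {X : Type} (f : X -> X) {w : (X -> Prop) -> Prop} :
  is_ultrafilter w -> is_ultrafilter (pushp f w).
Proof.
  intros [H1 [H2 [H3 [H4 H5]]]]. unfold pushp.
  repeat split; auto.
  intros A B HA HAB. apply (H4 _ _ HA). intros x; apply HAB.
Qed.

Definition push {X : Type} (f : X -> X) (w : betaX X) : betaX X :=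
  exist _ (pushp f (proj1_sig w)) (pushp_ultrafilter f (proj2_sig w)).

Lemma push_comp {X : Type} (f g : X -> X) w : push (fun x => f (g x)) w = push f (push g w).
Proof. apply betaX_eq. reflexivity. Qed.

Lemma push_ext {X : Type} (f g : X -> X) w : (forall x, f x = g x) -> push f w = push g w.
Proof. intros H. apply functional_extensionality in H. now subst. Qed.

(** * Three-colouring fixed-point-free injections of a countable set *)

(* Greedy colouring of a graph on nat in which every vertex has at most two
   neighbours: vertex k gets the least colour in {0,1,2} not used by its
   neighbours j < k. *)
Section GreedyColouring.
Variable adj : nat -> nat -> Prop.
Hypothesis adj_sparse : forall k j1 j2 j3,
  adj j1 k -> adj j2 k -> adj j3 k -> j1 = j2 \/ j1 = j3 \/ j2 = j3.

Definition blocked (l : list nat) (k c : nat) : Prop :=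
  exists j, (j < k)%nat /\ adj j k /\ nth j l 0%nat = c.

Definition pick (l : list nat) (k : nat) : nat :=
  if excluded_middle_informative (blocked l k 0) then
    if excluded_middle_informative (blocked l k 1) then 2%nat else 1%nat
  else 0%nat.

Lemma pick_le2 l k : (pick l k <= 2)%nat.
Proof. unfold pick; repeat destruct excluded_middle_informative; lia. Qed.

(* at most two neighbours, so one of three colours is always free *)
Lemma pick_free l k : ~ blocked l k (pick l k).
Proof.
  unfold pick.
  destruct (excluded_middle_informative (blocked l k 0)) as [[j0 [_ [A0 C0]]]|B0]; [|exact B0].
  destruct (excluded_middle_informative (blocked l k 1)) as [[j1 [_ [A1 C1]]]|B1]; [|exact B1].
  intros [j2 [_ [A2 C2]]].
  destruct (adj_sparse _ _ _ _ A0 A1 A2) as [<-|[<-| <-]]; congruence.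
Qed.

Fixpoint colours (n : nat) : list nat :=
  match n with
  | O => nil
  | S m => colours m ++ pick (colours m) m :: nil
  end.

Definition colour (k : nat) : nat := pick (colours k) k.

Lemma colours_length n : length (colours n) = n.
Proof. induction n; simpl; auto. rewrite length_app, IHn. simpl. lia. Qed.

Lemma colours_nth n j : (j < n)%nat -> nth j (colours n) 0%nat = colour j.
Proof.
  induction n; intros H; [lia|]. simpl.
  destruct (Nat.eq_dec j n) as [->|Hne].
  - rewrite app_nth2; rewrite colours_length; [|lia]. now rewrite Nat.sub_diag.
  - rewrite app_nth1 by (rewrite colours_length; lia). apply IHn. lia.
Qed.

Lemma colour_proper j k : (j < k)%nat -> adj j k -> colour j <> colour k.
Proof.
  intros Hjk Hadj Heq. apply (pick_free (colours k) k).
  exists j. rewrite colours_nth; auto.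
Qed.

End GreedyColouring.

Lemma injection_3colouring {X : Type} (e : nat -> X)
  (einj : forall m n, e m = e n -> m = n) (esurj : forall x, exists n, e n = x)
  (f : X -> X) (finj : forall x y, f x = f y -> x = y) :
  exists c : X -> nat, (forall x, (c x <= 2)%nat) /\ (forall x, f x <> x -> c (f x) <> c x).
Proof.
  set (adj := fun j k => f (e j) = e k \/ f (e k) = e j).
  assert (sparse : forall k j1 j2 j3,
             adj j1 k -> adj j2 k -> adj j3 k -> j1 = j2 \/ j1 = j3 \/ j2 = j3).
  { intros k j1 j2 j3.
    (* k has at most one f-preimage and one f-image *)
    assert (into : forall i j, f (e i) = e k -> f (e j) = e k -> i = j)
      by (intros i j Hi Hj; apply einj, finj; congruence).
    assert (outof : forall i j, f (e k) = e i -> f (e k) = e j -> i = j)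
      by (intros i j Hi Hj; apply einj; congruence).
    intros [H1|H1] [H2|H2] [H3|H3]; eauto. }
  destruct (choice (fun x n => e n = x) esurj) as [idx Hidx].
  exists (fun x => colour adj (idx x)). split.
  - intros x. apply pick_le2.
  - intros x Hfx Heq.
    assert (Hadj1 : adj (idx x) (idx (f x))) by (left; now rewrite !Hidx).
    assert (Hadj2 : adj (idx (f x)) (idx x)) by (right; now rewrite !Hidx).
    destruct (Nat.lt_total (idx x) (idx (f x))) as [Hlt|[Hsame|Hlt]].
    + exact (colour_proper _ sparse _ _ Hlt Hadj1 (eq_sym Heq)).
    + apply Hfx. rewrite <- (Hidx (f x)), <- Hsame. apply Hidx.
    + exact (colour_proper _ sparse _ _ Hlt Hadj2 Heq).
Qed.

(** * Ultrafilters fixed by injections *)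

Section FixedUltrafilters.
Variables (X : Type) (e : nat -> X).
Hypotheses (einj : forall m n, e m = e n -> m = n) (esurj : forall x, exists n, e n = x).

(* An ultrafilter on a countable set fixed by the extension of an injection f
   contains the fixed-point set of f: otherwise some colour class K of the
   non-fixed points is in w, and so is f(K), which is disjoint from K. *)
Lemma fixed_ultrafilter (f : X -> X) (finj : forall x y, f x = f y -> x = y) (w : betaX X) :
  push f w = w -> proj1_sig w (fun x => f x = x).
Proof.
  intros Hfix. destruct (uf_dich w (fun x => f x = x)) as [Hfixed|Hmoved]; auto. exfalso.
  destruct (injection_3colouring e einj esurj f finj) as [c [Hc2 Hc]].
  set (K := fun i x => f x <> x /\ c x = i).
  assert (HK : exists i, proj1_sig w (K i)).
  { destruct (uf_dich w (K 0%nat)) as [H0|N0]; [eauto|].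
    destruct (uf_dich w (K 1%nat)) as [H1|N1]; [eauto|].
    destruct (uf_dich w (K 2%nat)) as [H2|N2]; [eauto|].
    destruct (uf_nonempty w (uf_and w Hmoved (uf_and w N0 (uf_and w N1 N2))))
      as [y [Hy [Hy0 [Hy1 Hy2]]]].
    exfalso. assert (Hc2y := Hc2 y). unfold K in *.
    destruct (c y) as [|[|[|n]]]; [apply Hy0|apply Hy1|apply Hy2|lia]; auto. }
  destruct HK as [i Hi].
  set (imgK := fun y => exists k, K i k /\ f k = y).
  assert (Himg : proj1_sig w imgK).
  { rewrite <- Hfix. simpl. unfold pushp. apply (uf_up w Hi). intros x Hx. exists x; auto. }
  destruct (uf_nonempty w (uf_and w Himg Hi)) as [y [[k [[Hk Hck] <-]] [_ Hcy]]].
  apply (Hc k Hk). congruence.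
Qed.

(* For an injection g and a bijection h (with inverse hinv), the extensions
   agree at w exactly when g and h agree on a set in w: apply the previous
   lemma to the injection hinv o g. *)
Lemma push_eq_iff (g h hinv : X -> X) (ginj : forall x y, g x = g y -> x = y)
  (h_hinv : forall x, h (hinv x) = x) (hinv_h : forall x, hinv (h x) = x) (w : betaX X) :
  push g w = push h w <-> proj1_sig w (fun x => g x = h x).
Proof.
  split.
  - intros Hgh.
    assert (Hfix : push (fun x => hinv (g x)) w = w).
    { rewrite push_comp, Hgh, <- push_comp, (push_ext _ _ _ hinv_h).
      now apply betaX_eq. }
    assert (finj : forall x y, hinv (g x) = hinv (g y) -> x = y).
    { intros x y Hxy. apply ginj. now rewrite <- (h_hinv (g x)), Hxy, h_hinv. }
    apply (uf_up w (fixed_ultrafilter _ finj _ Hfix)). intros x Hx.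
    now rewrite <- (h_hinv (g x)), Hx.
  - intros Hagree. apply betaX_eq. simpl. unfold pushp.
    apply functional_extensionality; intros B. apply propositional_extensionality.
    apply uf_iff. apply (uf_up w Hagree). intros x ->. reflexivity.
Qed.
End FixedUltrafilters.

Arguments push_eq_iff {X} e einj esurj {g h hinv}.

(** * Words, walks and neighbourhoods in graphs generated by maps *)

Section Words.
Variables (G : Type) (gens : list G).

Fixpoint words (n : nat) : list (list G) :=
  match n with
  | O => nil :: nil
  | S m => nil :: flat_map (fun p => map (fun s => s :: p) gens) (words m)
  end.

Lemma in_words_S n p :
  In p (words (S n)) <-> p = nil \/ exists s q, p = s :: q /\ In s gens /\ In q (words n).
Proof.
  simpl. rewrite in_flat_map. split.
  - intros [H|[q [Hq H]]]; [now left|right].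
    apply in_map_iff in H. destruct H as [s [<- Hs]]. eauto.
  - intros [H|[s [q [-> [Hs Hq]]]]]; [now left|right].
    exists q. split; auto. apply in_map_iff. eauto.
Qed.

Lemma nil_in_words n : In nil (words n).
Proof. destruct n; simpl; auto. Qed.

Lemma words_mono n p : In p (words n) -> In p (words (S n)).
Proof.
  revert p; induction n; intros p H.
  - destruct H as [<-|[]]. apply nil_in_words.
  - apply in_words_S in H. apply in_words_S.
    destruct H as [H|[s [q [H1 [H2 H3]]]]]; [now left|right]. eauto 6.
Qed.

Variable W : Type.

(* evaluation of a word at a point, rightmost letter first *)
Definition ev (step : G -> W -> W) (o : W) (p : list G) : W := fold_right step o p.

Definition stepE (step : G -> W -> W) (u v : W) : Prop :=
  u <> v /\ exists s, In s gens /\ step s u = v.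

Lemma walk_refl (E : W -> W -> Prop) n x : walk_le E n x x.
Proof. induction n; simpl; auto. Qed.

Lemma walk_words (step : G -> W -> W) (o : W) n x :
  walk_le (stepE step) n o x <-> exists p, In p (words n) /\ ev step o p = x.
Proof.
  revert x; induction n; intros x; split.
  - simpl. intros <-. exists nil. simpl. auto.
  - intros [p [[<-|[]] <-]]. reflexivity.
  - intros [H|[z [Hz [_ [s [Hs <-]]]]]].
    + apply IHn in H. destruct H as [p [Hp Hpx]]. exists p. split; auto. now apply words_mono.
    + apply IHn in Hz. destruct Hz as [p [Hp <-]].
      exists (s :: p). split; auto. apply in_words_S. eauto 6.
  - intros [p [Hp <-]]. apply in_words_S in Hp.
    destruct Hp as [->|[s [q [-> [Hs Hq]]]]]; [left; apply walk_refl|].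
    assert (Hwalk : walk_le (stepE step) n o (ev step o q)) by (apply IHn; eauto).
    simpl. destruct (classic (step s (ev step o q) = ev step o q)) as [Hloop|Hne].
    + left. now rewrite Hloop.
    + right. exists (ev step o q). split; auto. split; eauto.
Qed.

End Words.

Arguments words {G} gens n.
Arguments in_words_S {G gens n p}.
Arguments nil_in_words {G} gens n.
Arguments words_mono {G gens n p}.
Arguments walk_words {G gens W step o n x}.
Arguments ev {G W} step o p.
Arguments stepE {G} gens {W} step u v.

Section Transfer.
Variables (G : Type) (gens : list G) (W1 W2 : Type).
Variables (step1 : G -> W1 -> W1) (step2 : G -> W2 -> W2).

Definition same_pattern (n : nat) (o1 : W1) (o2 : W2) : Prop :=
  forall p q, In p (words gens n) -> In q (words gens n) ->
    (ev step1 o1 p = ev step1 o1 q <-> ev step2 o2 p = ev step2 o2 q).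

Lemma same_pattern_mono {n o1 o2} : same_pattern (S n) o1 o2 -> same_pattern n o1 o2.
Proof. intros H p q Hp Hq. apply H; now apply words_mono. Qed.

Lemma same_pattern_edge {r o1 o2 p q} :
  same_pattern (S r) o1 o2 -> In p (words gens r) -> In q (words gens r) ->
  (stepE gens step1 (ev step1 o1 p) (ev step1 o1 q) <->
   stepE gens step2 (ev step2 o2 p) (ev step2 o2 q)).
Proof.
  intros Hpat Hp Hq.
  assert (Hsp : forall s, In s gens -> In (s :: p) (words gens (S r)))
    by (intros s Hs; apply in_words_S; eauto 6).
  assert (Hq' := words_mono Hq).
  assert (Hpq := same_pattern_mono Hpat p q Hp Hq).
  unfold stepE. split; intros [Hne [s [Hs Hstep]]]; split; try tauto;
    exists s; split; auto; apply (Hpat (s :: p) q (Hsp s Hs) Hq'); exact Hstep.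
Qed.

Lemma same_pattern_nbhd r o1 o2 (V : Type) (eH : V -> V -> Prop) (v0 : V) :
  same_pattern (S r) o1 o2 ->
  nbhd_iso (stepE gens step1) r o1 eH v0 -> nbhd_iso (stepE gens step2) r o2 eH v0.
Proof.
  intros Hpat [f1 [Hinj [Hroot [Hball Hedge]]]].
  assert (Hr := same_pattern_mono Hpat).
  (* each vertex of H is addressed by a word of length <= r *)
  destruct (choice (fun v p => In p (words gens r) /\ ev step1 o1 p = f1 v)) as [P HP].
  { intros v. apply walk_words, Hball. eauto. }
  exists (fun v => ev step2 o2 (P v)). split; [|split; [|split]].
  - intros u v Huv. apply Hinj. rewrite <- (proj2 (HP u)), <- (proj2 (HP v)).
    apply Hr; try apply HP; auto.
  - destruct (HP v0) as [Hv0 Hev]. apply (Hr (P v0) nil Hv0 (nil_in_words _ _)).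
    now rewrite Hev, Hroot.
  - intros x. rewrite walk_words. split.
    + intros [q [Hq <-]].
      destruct (proj1 (Hball (ev step1 o1 q))) as [v Hv]; [apply walk_words; eauto|].
      exists v. apply Hr; try apply HP; auto. now rewrite (proj2 (HP v)).
    + intros [v <-]. exists (P v). split; auto. apply HP.
  - intros u v. rewrite Hedge, <- (proj2 (HP u)), <- (proj2 (HP v)).
    apply (same_pattern_edge Hpat); apply HP.
Qed.

End Transfer.

Arguments same_pattern {G} gens {W1 W2} step1 step2 n o1 o2.
Arguments same_pattern_nbhd {G gens W1 W2 step1 step2 r o1 o2 V eH v0}.

Lemma same_pattern_sym {G : Type} {gens : list G} {W1 W2 : Type}
  {step1 : G -> W1 -> W1} {step2 : G -> W2 -> W2} {n o1 o2} :
  same_pattern gens step1 step2 n o1 o2 -> same_pattern gens step2 step1 n o2 o1.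
Proof. intros H p q Hp Hq. symmetry. now apply H. Qed.

Section Action.
Variables (X : Type) (a : fg_action X).

Lemma gmul_Vr g : gmul a g (ginv a g) = gone a.
Proof.
  (* g g^-1 = (g^-1)^-1 g^-1 g g^-1 = (g^-1)^-1 g^-1 = 1 *)
  set (k := ginv a g).
  rewrite <- (gmul_1l a (gmul a g k)), <- (gmul_Vl a k) at 1.
  rewrite <- (gmul_assoc a (ginv a k) k (gmul a g k)), (gmul_assoc a k g k).
  unfold k at 2. now rewrite (gmul_Vl a g), (gmul_1l a k), gmul_Vl.
Qed.

Lemma act_inv_l g x : act a (ginv a g) (act a g x) = x.
Proof. now rewrite <- act_mul, gmul_Vl, act_one. Qed.

Lemma act_inv_r g x : act a g (act a (ginv a g) x) = x.
Proof. now rewrite <- act_mul, gmul_Vr, act_one. Qed.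

Lemma act_inj g x y : act a g x = act a g y -> x = y.
Proof. intros H. now rewrite <- (act_inv_l g x), H, act_inv_l. Qed.

Definition beta_act (s : grp a) (w : betaX X) : betaX X := push (act a s) w.

Lemma ext_map_pushp s (w : betaX X) :
  ext_map (act a s) (proj1_sig w) = pushp (act a s) (proj1_sig w).
Proof.
  apply functional_extensionality; intros B. apply propositional_extensionality.
  unfold ext_map, pushp, image. split.
  - intros [A [HA HB]]. apply (uf_up w HA). intros x Hx. apply HB. eauto.
  - intros H. exists (fun x => B (act a s x)). split; auto. intros y; split.
    + intros Hy. exists (act a (ginv a s) y). now rewrite act_inv_r.
    + now intros [x [Hx <-]].
Qed.

Lemma graphing_stepE u v : graphing a u v <-> stepE (gens a) beta_act u v.
Proof.
  unfold graphing, stepE, beta_act.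
  split; intros [Hne [s [Hs H]]]; split; auto; exists s; split; auto.
  - apply betaX_eq. now rewrite H, ext_map_pushp.
  - rewrite <- H. simpl. now rewrite ext_map_pushp.
Qed.

Definition word_elt (p : list (grp a)) : grp a := fold_right (gmul a) (gone a) p.

Lemma ev_act x p : ev (act a) x p = act a (word_elt p) x.
Proof.
  induction p as [|s p IH]; simpl.
  - now rewrite act_one.
  - now rewrite IH, act_mul.
Qed.

Lemma ev_beta_act w p : ev beta_act w p = push (act a (word_elt p)) w.
Proof.
  induction p as [|s p IH].
  - change (w = push (act a (gone a)) w).
    rewrite (push_ext _ (fun x => x) w (act_one a)). now apply betaX_eq.
  - change (push (act a s) (ev beta_act w p) = push (act a (gmul a s (word_elt p))) w).
    rewrite IH, <- push_comp. apply push_ext. intros x. now rewrite act_mul.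
Qed.

Variables (e : nat -> X).
Hypotheses (einj : forall m n, e m = e n -> m = n) (esurj : forall x, exists n, e n = x).

Lemma beta_coincidence w p q :
  ev beta_act w p = ev beta_act w q <-> proj1_sig w (fun x => ev (act a) x p = ev (act a) x q).
Proof.
  rewrite !ev_beta_act.
  rewrite (push_eq_iff e einj esurj (act_inj _) (act_inv_r _) (act_inv_l _)).
  apply uf_equiv. intros x. now rewrite !ev_act.
Qed.

(* finitely many pairs of words matter, so a single set in w consists of
   points having the same coincidence pattern as w *)
Lemma pattern_set w n :
  proj1_sig w (fun x => same_pattern (gens a) (act a) beta_act n x w).
Proof.
  set (L := list_prod (words (gens a) n) (words (gens a) n)).
  set (agree := fun pq x => ev (act a) x (fst pq) = ev (act a) x (snd pq) <->
                            ev beta_act w (fst pq) = ev beta_act w (snd pq)).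
  assert (HL : proj1_sig w (fun x => forall pq, In pq L -> agree pq x)).
  { apply uf_list. intros [p q] _. apply uf_decide. apply beta_coincidence. }
  apply (uf_up w HL). intros x Hx p q Hp Hq. apply (Hx (p, q)). now apply in_prod.
Qed.

Lemma graphing_nbhd_iff (T : X -> X -> Prop) (HT : forall x y, T x y <-> schreier a x y)
  r (V : Type) (eH : V -> V -> Prop) (v0 : V) (w : betaX X) :
  nbhd_iso (graphing a) r w eH v0 <-> proj1_sig w (A_set T r eH v0).
Proof.
  assert (ET : T = stepE (gens a) (act a)).
  { do 2 (apply functional_extensionality; intro). apply propositional_extensionality. apply HT. }
  assert (EG : graphing a = stepE (gens a) beta_act).
  { do 2 (apply functional_extensionality; intro). apply propositional_extensionality.
    apply graphing_stepE. }
  unfold A_set. rewrite ET, EG. split.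
  - intros Hiso. apply (uf_up w (pattern_set w (S r))). intros x Hx.
    exact (same_pattern_nbhd (same_pattern_sym Hx) Hiso).
  - intros HA. destruct (uf_nonempty w (uf_and w HA (pattern_set w (S r)))) as [x [Hx Hpat]].
    exact (same_pattern_nbhd Hpat Hx).
Qed.

End Action.

Arguments graphing_nbhd_iff {X a} e einj esurj {T} HT r {V} eH v0 w.

Theorem proposition4p3
  (X : Type)
  (HX : exists f : nat -> X, (forall m n, f m = f n -> m = n) /\ (forall x, exists n, f n = x))
  (T : X -> X -> Prop) (d : nat)
  (a : fg_action X)
  (HT : forall x y, T x y <-> schreier a x y)
  (HdegT : max_deg_le T d)
  (mu : (X -> Prop) -> R)
  (Hmean : is_mean mu)
  (Hinv : invariant_mean a mu)
  (nu : (betaX X -> Prop) -> R)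
  (Hnu : regular_borel_prob nu)
  (Hnumu : forall A : X -> Prop, nu (U_ A) = mu A)
  (r : nat) (Hr : (1 <= r)%nat)
  (V : Type) (eH : V -> V -> Prop) (v0 : V)
  (HH : finite_simple_graph eH)
  (Hrad : has_radius eH v0 r)
  (HdegH : max_deg_le eH d) :
  mu (A_set T r eH v0) = nu (A_set (graphing a) r eH v0).
Proof.
  destruct HX as [e [einj esurj]].
  assert (Hset : A_set (graphing a) r eH v0 = U_ (A_set T r eH v0)).
  { apply functional_extensionality; intros w. apply propositional_extensionality.
    exact (graphing_nbhd_iff e einj esurj HT r eH v0 w). }
  now rewrite Hset, Hnumu.
Qed.
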